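(* Let $n\ge1$, $\varepsilon>0$, $A>0$, and define $$\Theta(\eta)=e^{-\varepsilon\left[A+(|x|^2+|y|^2)^2+\tau^2\right]^{1/2}},\qquad \eta=(x,y,\tau)\in\mathbb{H}^n.$$ Then $-\Delta_{\mathbb{H}}\Theta(\eta)\le 2\varepsilon(Q+2)\Theta(\eta)$ for all $\eta\in\mathbb{H}^n$.
   Context: $\mathbb{H}^n$ is $\mathbb{R}^{2n+1}$ with points $\eta=(x,y,\tau)$, $x,y\in\mathbb{R}^n$, $\tau\in\mathbb{R}$. The vector fields are $X_i=\partial_{x_i}-2y_i\partial_\tau$, $Y_i=\partial_{y_i}+2x_i\partial_\tau$ ($i=1,\dots,n$), the sub-Laplacian is $\Delta_{\mathbb{H}}=\sum_{i=1}^n(X_i^2+Y_i^2)$, and $Q=2n+2$. *)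

From Stdlib Require Import Reals.
From Coquelicot Require Import Coquelicot.
Open Scope R_scope.

(* A point of H^n is (x, y, tau) with x, y : nat -> R, of which only the
   coordinates 0 .. n-1 are used. Functions on H^n are curried. *)
Definition Hfun := (nat -> R) -> (nat -> R) -> R -> R.

Fixpoint sum_lt (n : nat) (g : nat -> R) : R :=
  match n with O => 0 | S m => sum_lt m g + g m end.

Definition upd (x : nat -> R) (i : nat) (s : R) : nat -> R :=
  fun j => if Nat.eqb j i then s else x j.

Definition dx (i : nat) (f : Hfun) : Hfun :=
  fun x y t => Derive (fun s => f (upd x i s) y t) (x i).
Definition dy (i : nat) (f : Hfun) : Hfun :=
  fun x y t => Derive (fun s => f x (upd y i s) t) (y i).
Definition dtau (f : Hfun) : Hfun :=
  fun x y t => Derive (fun s => f x y s) t.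

Definition Xv (i : nat) (f : Hfun) : Hfun :=
  fun x y t => dx i f x y t - 2 * y i * dtau f x y t.
Definition Yv (i : nat) (f : Hfun) : Hfun :=
  fun x y t => dy i f x y t + 2 * x i * dtau f x y t.

Definition subLap (n : nat) (f : Hfun) : Hfun :=
  fun x y t => sum_lt n (fun i => Xv i (Xv i f) x y t + Yv i (Yv i f) x y t).

Definition normsq (n : nat) (x : nat -> R) : R := sum_lt n (fun i => x i ^ 2).

Definition Qdim (n : nat) : R := 2 * INR n + 2.

Definition Theta (n : nat) (eps A : R) : Hfun :=
  fun x y t => exp (- eps * sqrt (A + (normsq n x + normsq n y) ^ 2 + t ^ 2)).

From Stdlib Require Import Reals Lra Lia FunctionalExtensionality.
From Coquelicot Require Import Coquelicot.
Open Scope R_scope.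

(* Write Theta = g o u with u = A + (|x|^2 + |y|^2)^2 + tau^2 and g v = exp (- eps sqrt v).
   For every horizontal field, X (X (g o u)) = g''(u) (X u)^2 + g'(u) X (X u), and g is
   convex, so - Delta (g o u) <= - g'(u) Delta u.  A direct computation gives
   Delta u = 8 (n + 2) (|x|^2 + |y|^2), and since |x|^2 + |y|^2 <= sqrt u this yields
   - g'(u) Delta u <= 4 eps (n + 2) g(u) = 2 eps (Q + 2) Theta. *)

Lemma sum_lt_ext n (F G : nat -> R) :
  (forall i, (i < n)%nat -> F i = G i) -> sum_lt n F = sum_lt n G.
Proof.
  induction n as [|n IH]; intros H; simpl; [reflexivity|].
  rewrite IH by (intros; apply H; lia). rewrite H by lia. reflexivity.
Qed.

Lemma sum_lt_add n (F G : nat -> R) :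
  sum_lt n (fun i => F i + G i) = sum_lt n F + sum_lt n G.
Proof. induction n as [|n IH]; simpl; [ring | rewrite IH; ring]. Qed.

Lemma sum_lt_scal n c (F : nat -> R) :
  sum_lt n (fun i => c * F i) = c * sum_lt n F.
Proof. induction n as [|n IH]; simpl; [ring | rewrite IH; ring]. Qed.

Lemma sum_lt_const n c : sum_lt n (fun _ => c) = INR n * c.
Proof. induction n as [|n IH]; simpl sum_lt; [simpl; ring | rewrite IH, S_INR; ring]. Qed.

Lemma sum_lt_nonneg n (F : nat -> R) : (forall i, 0 <= F i) -> 0 <= sum_lt n F.
Proof.
  intros H. induction n as [|n IH]; simpl; [lra|].
  specialize (H n). lra.
Qed.

Lemma normsq_nonneg n x : 0 <= normsq n x.
Proof. apply sum_lt_nonneg. intros i. apply pow2_ge_0. Qed.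

Lemma upd_same x i s : upd x i s i = s.
Proof. unfold upd. rewrite Nat.eqb_refl. reflexivity. Qed.

Lemma upd_id x i : upd x i (x i) = x.
Proof.
  extensionality j. unfold upd.
  destruct (Nat.eqb_spec j i); [subst|]; reflexivity.
Qed.

Lemma normsq_upd n x i s : (i < n)%nat ->
  normsq n (upd x i s) = normsq n x - x i ^ 2 + s ^ 2.
Proof.
  unfold normsq, upd. induction n as [|n IH]; intros Hi; cbn [sum_lt]; [lia|].
  destruct (Nat.eqb_spec n i) as [<-|Hni].
  - rewrite sum_lt_ext with (G := fun j => x j ^ 2).
    + ring.
    + intros j Hj. destruct (Nat.eqb_spec j n); [lia | reflexivity].
  - rewrite IH by lia. ring.
Qed.

Definition ex_dx (i : nat) (f : Hfun) x y t := ex_derive (fun s : R => f (upd x i s) y t) (x i).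
Definition ex_dy (i : nat) (f : Hfun) x y t := ex_derive (fun s : R => f x (upd y i s) t) (y i).
Definition ex_dtau (f : Hfun) x y t := ex_derive (fun s : R => f x y s) t.

Lemma Xv_is_derive i (f : Hfun) x y t fx ft :
  is_derive (fun s : R => f (upd x i s) y t) (x i) fx -> is_derive (fun s : R => f x y s) t ft ->
  Xv i f x y t = fx - 2 * y i * ft.
Proof.
  intros Hx Ht. unfold Xv, dx, dtau.
  rewrite (is_derive_unique _ _ _ Hx), (is_derive_unique _ _ _ Ht). reflexivity.
Qed.

Lemma Yv_is_derive i (f : Hfun) x y t fy ft :
  is_derive (fun s : R => f x (upd y i s) t) (y i) fy -> is_derive (fun s : R => f x y s) t ft ->
  Yv i f x y t = fy + 2 * x i * ft.
Proof.
  intros Hy Ht. unfold Yv, dy, dtau.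
  rewrite (is_derive_unique _ _ _ Hy), (is_derive_unique _ _ _ Ht). reflexivity.
Qed.

Lemma Xv_mult i (f g : Hfun) x y t :
  ex_dx i f x y t -> ex_dtau f x y t -> ex_dx i g x y t -> ex_dtau g x y t ->
  Xv i (fun x y t => f x y t * g x y t) x y t = Xv i f x y t * g x y t + f x y t * Xv i g x y t.
Proof.
  intros Hfx Hft Hgx Hgt. unfold Xv, dx, dtau.
  rewrite !Derive_mult by assumption.
  change (fun s => f x y s) with (f x y); change (fun s => g x y s) with (g x y).
  rewrite upd_id. ring.
Qed.

Lemma Yv_mult i (f g : Hfun) x y t :
  ex_dy i f x y t -> ex_dtau f x y t -> ex_dy i g x y t -> ex_dtau g x y t ->
  Yv i (fun x y t => f x y t * g x y t) x y t = Yv i f x y t * g x y t + f x y t * Yv i g x y t.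
Proof.
  intros Hfy Hft Hgy Hgt. unfold Yv, dy, dtau.
  rewrite !Derive_mult by assumption.
  change (fun s => f x y s) with (f x y); change (fun s => g x y s) with (g x y).
  rewrite upd_id. ring.
Qed.

Section Composition.

Variables (h : R -> R) (u : Hfun) (x y : nat -> R) (t dh : R).
Hypothesis h_derive : is_derive h (u x y t) dh.

Lemma ex_dx_comp i : ex_dx i u x y t -> ex_dx i (fun x y t => h (u x y t)) x y t.
Proof.
  intros Hu. apply (ex_derive_comp h (fun s => u (upd x i s) y t)); [|exact Hu].
  rewrite upd_id. exists dh. exact h_derive.
Qed.

Lemma ex_dy_comp i : ex_dy i u x y t -> ex_dy i (fun x y t => h (u x y t)) x y t.
Proof.
  intros Hu. apply (ex_derive_comp h (fun s => u x (upd y i s) t)); [|exact Hu].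
  rewrite upd_id. exists dh. exact h_derive.
Qed.

Lemma ex_dtau_comp : ex_dtau u x y t -> ex_dtau (fun x y t => h (u x y t)) x y t.
Proof.
  intros Hu. apply (ex_derive_comp h (fun s => u x y s)); [|exact Hu].
  exists dh. exact h_derive.
Qed.

Lemma Xv_comp i : ex_dx i u x y t -> ex_dtau u x y t ->
  Xv i (fun x y t => h (u x y t)) x y t = dh * Xv i u x y t.
Proof.
  intros Hux Hut.
  rewrite (Xv_is_derive i _ x y t (Derive (fun s => u (upd x i s) y t) (x i) * dh)
             (Derive (fun s => u x y s) t * dh)).
  - unfold Xv, dx, dtau. ring.
  - apply (is_derive_comp h (fun s => u (upd x i s) y t)); [rewrite upd_id; exact h_derive|].
    apply Derive_correct, Hux.
  - apply (is_derive_comp h (fun s => u x y s)); [exact h_derive|].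
    apply Derive_correct, Hut.
Qed.

Lemma Yv_comp i : ex_dy i u x y t -> ex_dtau u x y t ->
  Yv i (fun x y t => h (u x y t)) x y t = dh * Yv i u x y t.
Proof.
  intros Huy Hut.
  rewrite (Yv_is_derive i _ x y t (Derive (fun s => u x (upd y i s) t) (y i) * dh)
             (Derive (fun s => u x y s) t * dh)).
  - unfold Yv, dy, dtau. ring.
  - apply (is_derive_comp h (fun s => u x (upd y i s) t)); [rewrite upd_id; exact h_derive|].
    apply Derive_correct, Huy.
  - apply (is_derive_comp h (fun s => u x y s)); [exact h_derive|].
    apply Derive_correct, Hut.
Qed.

End Composition.

Definition hgrad_sq (n : nat) (u : Hfun) x y t : R :=
  sum_lt n (fun i => Xv i u x y t ^ 2 + Yv i u x y t ^ 2).

Lemma hgrad_sq_nonneg n u x y t : 0 <= hgrad_sq n u x y t.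
Proof.
  apply sum_lt_nonneg. intros i.
  pose proof (pow2_ge_0 (Xv i u x y t)); pose proof (pow2_ge_0 (Yv i u x y t)). lra.
Qed.

Record horiz_C2 (n : nat) (u : Hfun) : Prop := {
  horiz_dx : forall i x y t, (i < n)%nat -> ex_dx i u x y t;
  horiz_dy : forall i x y t, (i < n)%nat -> ex_dy i u x y t;
  horiz_dtau : forall x y t, ex_dtau u x y t;
  horiz_Xv_dx : forall i x y t, (i < n)%nat -> ex_dx i (Xv i u) x y t;
  horiz_Xv_dtau : forall i x y t, (i < n)%nat -> ex_dtau (Xv i u) x y t;
  horiz_Yv_dy : forall i x y t, (i < n)%nat -> ex_dy i (Yv i u) x y t;
  horiz_Yv_dtau : forall i x y t, (i < n)%nat -> ex_dtau (Yv i u) x y t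
}.

Section SecondOrderChainRule.

Variables (g gd gdd : R -> R) (u : Hfun) (n : nat).
Hypothesis g_derive : forall x y t, is_derive g (u x y t) (gd (u x y t)).
Hypothesis gd_derive : forall x y t, is_derive gd (u x y t) (gdd (u x y t)).
Hypothesis u_C2 : horiz_C2 n u.

Lemma Xv_Xv_comp i x y t : (i < n)%nat ->
  Xv i (Xv i (fun x y t => g (u x y t))) x y t =
  gdd (u x y t) * Xv i u x y t ^ 2 + gd (u x y t) * Xv i (Xv i u) x y t.
Proof.
  intros Hi. destruct u_C2.
  replace (Xv i (fun x y t => g (u x y t))) with (fun x y t => gd (u x y t) * Xv i u x y t)
    by (extensionality x'; extensionality y'; extensionality t'; symmetry; apply Xv_comp; auto).
  rewrite Xv_mult, (Xv_comp gd u x y t (gdd (u x y t))); auto.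
  - ring.
  - apply (ex_dx_comp _ _ _ _ _ (gdd (u x y t))); auto.
  - apply (ex_dtau_comp _ _ _ _ _ (gdd (u x y t))); auto.
Qed.

Lemma Yv_Yv_comp i x y t : (i < n)%nat ->
  Yv i (Yv i (fun x y t => g (u x y t))) x y t =
  gdd (u x y t) * Yv i u x y t ^ 2 + gd (u x y t) * Yv i (Yv i u) x y t.
Proof.
  intros Hi. destruct u_C2.
  replace (Yv i (fun x y t => g (u x y t))) with (fun x y t => gd (u x y t) * Yv i u x y t)
    by (extensionality x'; extensionality y'; extensionality t'; symmetry; apply Yv_comp; auto).
  rewrite Yv_mult, (Yv_comp gd u x y t (gdd (u x y t))); auto.
  - ring.
  - apply (ex_dy_comp _ _ _ _ _ (gdd (u x y t))); auto.
  - apply (ex_dtau_comp _ _ _ _ _ (gdd (u x y t))); auto.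
Qed.

Lemma subLap_comp x y t :
  subLap n (fun x y t => g (u x y t)) x y t =
  gdd (u x y t) * hgrad_sq n u x y t + gd (u x y t) * subLap n u x y t.
Proof.
  unfold subLap, hgrad_sq. rewrite <- !sum_lt_scal, <- sum_lt_add.
  apply sum_lt_ext. intros i Hi.
  rewrite Xv_Xv_comp, Yv_Yv_comp by exact Hi. ring.
Qed.

End SecondOrderChainRule.

Lemma is_derive_upd (F : R -> R -> R) n i x D : (i < n)%nat ->
  is_derive (fun s : R => F (normsq n x - x i ^ 2 + s ^ 2) s) (x i) D ->
  is_derive (fun s : R => F (normsq n (upd x i s)) (upd x i s i)) (x i) D.
Proof.
  intros Hi. apply is_derive_ext. intros s.
  rewrite normsq_upd, upd_same by exact Hi. reflexivity.
Qed.

Section Gauge.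

Variables (n : nat) (A : R).

Definition gauge4 : Hfun := fun x y t => A + (normsq n x + normsq n y) ^ 2 + t ^ 2.

Lemma gauge4_dtau x y t : is_derive (fun s : R => gauge4 x y s) t (2 * t).
Proof. unfold gauge4. auto_derive; [exact I | ring]. Qed.

Variable i : nat.
Hypothesis i_lt_n : (i < n)%nat.

Lemma gauge4_dx x y t :
  is_derive (fun s : R => gauge4 (upd x i s) y t) (x i) (4 * (normsq n x + normsq n y) * x i).
Proof.
  apply (is_derive_upd (fun q _ => A + (q + normsq n y) ^ 2 + t ^ 2)); [exact i_lt_n|].
  auto_derive; [exact I | ring].
Qed.

Lemma gauge4_dy x y t :
  is_derive (fun s : R => gauge4 x (upd y i s) t) (y i) (4 * (normsq n x + normsq n y) * y i).
Proof.
  apply (is_derive_upd (fun q _ => A + (normsq n x + q) ^ 2 + t ^ 2)); [exact i_lt_n|].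
  auto_derive; [exact I | ring].
Qed.

Lemma Xv_gauge4 x y t :
  Xv i gauge4 x y t = 4 * (normsq n x + normsq n y) * x i - 4 * y i * t.
Proof. rewrite (Xv_is_derive _ _ _ _ _ _ _ (gauge4_dx x y t) (gauge4_dtau x y t)). ring. Qed.

Lemma Yv_gauge4 x y t :
  Yv i gauge4 x y t = 4 * (normsq n x + normsq n y) * y i + 4 * x i * t.
Proof. rewrite (Yv_is_derive _ _ _ _ _ _ _ (gauge4_dy x y t) (gauge4_dtau x y t)). ring. Qed.

Lemma Xv_gauge4_dx x y t :
  is_derive (fun s : R => Xv i gauge4 (upd x i s) y t) (x i)
    (8 * x i ^ 2 + 4 * (normsq n x + normsq n y)).
Proof.
  apply (is_derive_ext
    (fun s => 4 * (normsq n (upd x i s) + normsq n y) * upd x i s i - 4 * y i * t)).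
  { intros s. symmetry. apply Xv_gauge4. }
  apply (is_derive_upd (fun q z => 4 * (q + normsq n y) * z - 4 * y i * t)); [exact i_lt_n|].
  auto_derive; [exact I | ring].
Qed.

Lemma Xv_gauge4_dtau x y t : is_derive (fun s : R => Xv i gauge4 x y s) t (- 4 * y i).
Proof.
  apply (is_derive_ext (fun s => 4 * (normsq n x + normsq n y) * x i - 4 * y i * s)).
  { intros s. symmetry. apply Xv_gauge4. }
  auto_derive; [exact I | ring].
Qed.

Lemma Yv_gauge4_dy x y t :
  is_derive (fun s : R => Yv i gauge4 x (upd y i s) t) (y i)
    (8 * y i ^ 2 + 4 * (normsq n x + normsq n y)).
Proof.
  apply (is_derive_ext
    (fun s => 4 * (normsq n x + normsq n (upd y i s)) * upd y i s i + 4 * x i * t)).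
  { intros s. symmetry. apply Yv_gauge4. }
  apply (is_derive_upd (fun q z => 4 * (normsq n x + q) * z + 4 * x i * t)); [exact i_lt_n|].
  auto_derive; [exact I | ring].
Qed.

Lemma Yv_gauge4_dtau x y t : is_derive (fun s : R => Yv i gauge4 x y s) t (4 * x i).
Proof.
  apply (is_derive_ext (fun s => 4 * (normsq n x + normsq n y) * y i + 4 * x i * s)).
  { intros s. symmetry. apply Yv_gauge4. }
  auto_derive; [exact I | ring].
Qed.

Lemma Xv_Xv_Yv_Yv_gauge4 x y t :
  Xv i (Xv i gauge4) x y t + Yv i (Yv i gauge4) x y t =
  16 * x i ^ 2 + 16 * y i ^ 2 + 8 * (normsq n x + normsq n y).
Proof.
  rewrite (Xv_is_derive _ _ _ _ _ _ _ (Xv_gauge4_dx x y t) (Xv_gauge4_dtau x y t)).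
  rewrite (Yv_is_derive _ _ _ _ _ _ _ (Yv_gauge4_dy x y t) (Yv_gauge4_dtau x y t)).
  ring.
Qed.

End Gauge.

Lemma gauge4_horiz_C2 n A : horiz_C2 n (gauge4 n A).
Proof.
  split; intros; eexists.
  - apply gauge4_dx; assumption.
  - apply gauge4_dy; assumption.
  - apply gauge4_dtau.
  - apply Xv_gauge4_dx; assumption.
  - apply Xv_gauge4_dtau; assumption.
  - apply Yv_gauge4_dy; assumption.
  - apply Yv_gauge4_dtau; assumption.
Qed.

Lemma normsq_sq_lt_gauge4 n A x y t : 0 < A ->
  (normsq n x + normsq n y) ^ 2 < gauge4 n A x y t.
Proof. intros HA. unfold gauge4. pose proof (pow2_ge_0 t). lra. Qed.

Lemma gauge4_pos n A x y t : 0 < A -> 0 < gauge4 n A x y t.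
Proof.
  intros HA. pose proof (normsq_sq_lt_gauge4 n A x y t HA).
  pose proof (pow2_ge_0 (normsq n x + normsq n y)). lra.
Qed.

Lemma subLap_gauge4 n A x y t :
  subLap n (gauge4 n A) x y t = 8 * (INR n + 2) * (normsq n x + normsq n y).
Proof.
  unfold subLap.
  rewrite (sum_lt_ext n _
    (fun i => 16 * x i ^ 2 + 16 * y i ^ 2 + 8 * (normsq n x + normsq n y)))
    by (intros; apply Xv_Xv_Yv_Yv_gauge4; assumption).
  rewrite !sum_lt_add, !sum_lt_scal, sum_lt_const. unfold normsq. ring.
Qed.

Section ExpNegSqrt.

Variable eps : R.

Definition exp_neg_sqrt v := exp (- eps * sqrt v).
Definition exp_neg_sqrt_d1 v := - eps * exp_neg_sqrt v / (2 * sqrt v).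
Definition exp_neg_sqrt_d2 v := eps * exp_neg_sqrt v * (eps * sqrt v + 1) / (4 * sqrt v ^ 3).

Variable v : R.
Hypothesis v_pos : 0 < v.

Lemma is_derive_exp_neg_sqrt : is_derive exp_neg_sqrt v (exp_neg_sqrt_d1 v).
Proof.
  assert (Hs : 0 < sqrt v) by (apply sqrt_lt_R0, v_pos).
  unfold exp_neg_sqrt_d1, exp_neg_sqrt. auto_derive; [exact v_pos | field; lra].
Qed.

Lemma is_derive_exp_neg_sqrt_d1 : is_derive exp_neg_sqrt_d1 v (exp_neg_sqrt_d2 v).
Proof.
  assert (Hs : 0 < sqrt v) by (apply sqrt_lt_R0, v_pos).
  unfold exp_neg_sqrt_d2, exp_neg_sqrt_d1, exp_neg_sqrt.
  auto_derive; [repeat split; auto; lra | field; lra].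
Qed.

Lemma exp_neg_sqrt_d2_nonneg : 0 <= eps -> 0 <= exp_neg_sqrt_d2 v.
Proof.
  intros He. assert (Hs : 0 < sqrt v) by (apply sqrt_lt_R0, v_pos).
  assert (He' : 0 < exp_neg_sqrt v) by apply exp_pos.
  unfold exp_neg_sqrt_d2. apply Rmult_le_pos.
  - apply Rmult_le_pos; [apply Rmult_le_pos | nra]; lra.
  - left. apply Rinv_0_lt_compat. apply Rmult_lt_0_compat; [lra | apply pow_lt, Hs].
Qed.

Lemma exp_neg_sqrt_d1_bound r : 0 <= eps -> 0 <= r -> r ^ 2 <= v ->
  - exp_neg_sqrt_d1 v * r <= eps / 2 * exp_neg_sqrt v.
Proof.
  intros He Hr Hrv. assert (Hs : 0 < sqrt v) by (apply sqrt_lt_R0, v_pos).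
  assert (He' : 0 < exp_neg_sqrt v) by apply exp_pos.
  assert (Hrs : r <= sqrt v) by (rewrite <- (sqrt_pow2 r Hr); apply sqrt_le_1_alt, Hrv).
  unfold exp_neg_sqrt_d1.
  replace (- (- eps * exp_neg_sqrt v / (2 * sqrt v)) * r)
    with (eps / 2 * exp_neg_sqrt v * (r / sqrt v)) by (field; lra).
  assert (Hq : r / sqrt v <= 1) by exact (proj1 (Rdiv_le_1 r (sqrt v) Hs) Hrs).
  assert (Hc : 0 <= eps / 2 * exp_neg_sqrt v) by nra.
  nra.
Qed.

End ExpNegSqrt.

Theorem mainTheorem2 (n : nat) (eps A : R) :
  (1 <= n)%nat -> 0 < eps -> 0 < A ->
  forall (x y : nat -> R) (t : R),
    - subLap n (Theta n eps A) x y t <= 2 * eps * (Qdim n + 2) * Theta n eps A x y t.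
Proof.
  (* The bound also holds for n = 0. *)
  intros _ Heps HA x y t.
  change (Theta n eps A) with (fun x y t => exp_neg_sqrt eps (gauge4 n A x y t)).
  rewrite (subLap_comp _ (exp_neg_sqrt_d1 eps) (exp_neg_sqrt_d2 eps) _ n)
    by (intros; auto using is_derive_exp_neg_sqrt, is_derive_exp_neg_sqrt_d1,
                           gauge4_pos, gauge4_horiz_C2).
  rewrite subLap_gauge4.
  pose proof (hgrad_sq_nonneg n (gauge4 n A) x y t) as Hgrad.
  pose proof (normsq_sq_lt_gauge4 n A x y t HA) as Hr.
  set (u := gauge4 n A x y t) in *; set (r := normsq n x + normsq n y) in *.
  assert (Hd2 : 0 <= exp_neg_sqrt_d2 eps u)
    by (apply exp_neg_sqrt_d2_nonneg; [apply gauge4_pos, HA | lra]).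
  assert (Hd1 : - exp_neg_sqrt_d1 eps u * r <= eps / 2 * exp_neg_sqrt eps u).
  { apply exp_neg_sqrt_d1_bound; [apply gauge4_pos, HA | lra | | lra].
    apply Rplus_le_le_0_compat; apply normsq_nonneg. }
  pose proof (pos_INR n). unfold Qdim. nra.
Qed.
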